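(* Let $X$ be a finite cycle set. The following are equivalent: (1) $X$ is irreducible; (2) there is a finite brace $B$ such that $X\subseteq B$ (with the cycle set structure of $X$ being the one induced from $B$), $X=\{\lambda_b(x):b\in B\}$ for some $x\in X$, and $B=B(x)$ for all $x\in X$.
   Context: A cycle set is a non-empty set $X$ with one operation $\cdot$ such that each $\sigma_x:y\mapsto x\cdot y$ is bijective and $(x\cdot y)\cdot(x\cdot z)=(y\cdot x)\cdot(y\cdot z)$ for all $x,y,z$. A sub-cycle set is a subset that is again a cycle set under the restricted operation (the empty set also counts). $X$ is irreducible if $\emptyset$ and $X$ are its only sub-cycle sets. A brace is a triple $(B,+,\circ)$ with $(B,+)$ an abelian group, $(B,\circ)$ a group, and $a\circ(b+c)=a\circ b-a+a\circ c$; $\lambda_a(b):=-a+a\circ b$, $a^-$ is the inverse of $a$ in $(B,\circ)$, and $B$ is a cycle set via $a\cdot b:=\lambda_{a^-}(b)$. $B(x)$ is the smallest subset of $B$ containing $x$ that is a subgroup of both $(B,+)$ and $(B,\circ)$. *)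

From mathcomp Require Import all_boot.
Set Implicit Arguments. Unset Strict Implicit. Unset Printing Implicit Defensive.

Definition is_cycle_set (X : Type) (op : X -> X -> X) : Prop :=
  inhabited X /\ (forall x, bijective (op x)) /\
  (forall x y z, op (op x y) (op x z) = op (op y x) (op y z)).

(* Restricted operation well defined: Y closed under op;
   each restricted sigma_x (x in Y) bijective Y -> Y: injectivity is inherited,
   surjectivity onto Y is required; the cycle identity is inherited. *)
Definition sub_cycle_set (X : finType) (op : X -> X -> X) (Y : {set X}) : Prop :=
  (forall x y, x \in Y -> y \in Y -> op x y \in Y) /\
  (forall x, x \in Y -> forall z, z \in Y -> exists2 y, y \in Y & op x y = z).

Definition irreducible_cs (X : finType) (op : X -> X -> X) : Prop :=
  forall Y : {set X}, sub_cycle_set op Y -> Y = set0 \/ Y = setT.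

Record brace (B : Type) := Brace {
  badd : B -> B -> B; bopp : B -> B; bzero : B;
  bmul : B -> B -> B; binv : B -> B; bone : B;
  baddA : forall a b c, badd a (badd b c) = badd (badd a b) c;
  baddC : forall a b, badd a b = badd b a;
  badd0 : forall a, badd bzero a = a;
  baddN : forall a, badd (bopp a) a = bzero;
  bmulA : forall a b c, bmul a (bmul b c) = bmul (bmul a b) c;
  bmul1 : forall a, bmul bone a = a;
  bmulN : forall a, bmul (binv a) a = bone;
  bdistr : forall a b c,
    bmul a (badd b c) = badd (badd (bmul a b) (bopp a)) (bmul a c)
}.

Definition blambda B (Br : brace B) (a b : B) : B :=
  badd Br (bopp Br a) (bmul Br a b).

Definition bcycle B (Br : brace B) (a b : B) : B :=
  blambda Br (binv Br a) b.

Definition bi_subgroup B (Br : brace B) (S : B -> Prop) : Prop :=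
  S (bzero Br) /\ (forall a b, S a -> S b -> S (badd Br a b)) /\
  (forall a, S a -> S (bopp Br a)) /\
  S (bone Br) /\ (forall a b, S a -> S b -> S (bmul Br a b)) /\
  (forall a, S a -> S (binv Br a)).

Definition Bgen B (Br : brace B) (x : B) : B -> Prop :=
  fun b => forall S : B -> Prop, bi_subgroup Br S -> S x -> S b.

(* Write sigma_x = op x and e_x for the unit vectors of N^X.  By the cycle
   identity, x |-> sigma_x extends to a map tau from N^X to Sym(X) with
   tau(a + e_w) = sigma_(tau(a) w) o tau(a), and tau(a . b) = tau(b) o tau(a)
   for a . b = a + b o tau(a).  The kernel of tau is invariant under
   precomposition with every tau(a); together with a pigeonhole argument on
   n |-> tau(n e_w) this shows that it contains N.N^X for some N >= 2.  Hence
   (Z/N)^X with the same product is a finite brace, X embeds as the e_x, and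
   lambda_b(e_x) = e_(tau(b)^-1 x).  If X is irreducible, the lambda-orbit of x
   and the set of y with e_y in a given bi-subgroup are nonempty sub-cycle sets,
   hence all of X; since the e_y generate (Z/N)^X, B = B(x).

   Conversely, let Y be a nonempty sub-cycle set of X inside B.  The b such
   that lambda_b permutes Y form a subgroup P of (B,o) containing Y, and the b
   with lambda_c(b) in P for all c in P form a bi-subgroup (use
   u + v = u o lambda_(u^-)(v)) containing Y.  So this is all of B, every
   lambda_b preserves Y, and Y contains the lambda-orbit X. *)

From HB Require Import structures.
From mathcomp Require Import all_boot all_fingroup all_algebra.
From mathcomp Require Import boolp.
Set Implicit Arguments. Unset Strict Implicit. Unset Printing Implicit Defensive.
Import GRing.Theory FinRing.Theory.

Definition brace_zmod (B : finType) (Br : brace B) : Type := B.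
HB.instance Definition _ (B : finType) (Br : brace B) := Finite.on (brace_zmod Br).
HB.instance Definition _ (B : finType) (Br : brace B) :=
  GRing.isZmodule.Build (brace_zmod Br) (baddA Br) (baddC Br) (badd0 Br) (baddN Br).

Section Brace.
Variables (B : finType) (Br : brace B).
Local Open Scope ring_scope.
Local Notation V := (brace_zmod Br).
Local Notation "a *' b" := (@bmul V Br a b) (at level 40, left associativity).
Local Notation inv := (@binv V Br).
Local Notation lam := (@blambda V Br).
Implicit Types a b c d u : V.

Lemma lamE a b : lam a b = - a + a *' b :> V. Proof. by []. Qed.

Lemma bmul_lam a b : a *' b = a + lam a b :> V.
Proof. by rewrite lamE addNKr. Qed.

Lemma bmulDr a b c : a *' (b + c) = a *' b - a + a *' c :> V.
Proof. exact: bdistr. Qed.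

Lemma bmulr0 a : a *' 0 = a.
Proof.
have := bmulDr a 0 0; rewrite addr0 -addrA -{1}[a *' 0]addr0 => /addrI/esym/eqP.
by rewrite addrC subr_eq0 => /eqP.
Qed.

Lemma bone0 : bone Br = 0 :> V.
Proof. by rewrite -(bmulr0 (bone Br)) bmul1. Qed.

Lemma bmulrV a : a *' inv a = bone Br.
Proof.
have -> : a *' inv a = inv (inv a) *' (inv a *' (a *' inv a)).
  by rewrite bmulA bmulN bmul1.
by rewrite (bmulA Br (inv a)) bmulN bmul1 bmulN.
Qed.

Lemma lam_id b : lam 0 b = b.
Proof. by rewrite lamE oppr0 add0r -bone0 bmul1. Qed.

Lemma lam0 a : lam a 0 = 0.
Proof. by rewrite lamE bmulr0 addNr. Qed.

Lemma lamD a b c : lam a (b + c) = lam a b + lam a c.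
Proof. by rewrite !lamE bmulDr !addrA. Qed.

Lemma lamN a b : lam a (- b) = - lam a b.
Proof. by apply/eqP; rewrite -addr_eq0 -lamD addNr lam0. Qed.

Lemma lamM a b c : lam (a *' b) c = lam a (lam b c).
Proof.
by rewrite [lam b c]lamE lamD lamN !lamE bmulA opprD opprK [a - _]addrC -addrA addNKr.
Qed.

Lemma lamVK a : cancel (lam a) (lam (inv a)).
Proof. by move=> b; rewrite -lamM bmulN bone0 lam_id. Qed.

Lemma lamKV a : cancel (lam (inv a)) (lam a).
Proof. by move=> b; rewrite -lamM bmulrV bone0 lam_id. Qed.

Lemma addr_bmul a b : a + b = a *' lam (inv a) b.
Proof. by rewrite bmul_lam lamKV. Qed.

Lemma binvE a : inv a = - lam (inv a) a.
Proof. by rewrite lamE bmulN bone0 addr0 opprK. Qed.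

Section IrreducibleOfBrace.
Variables (X : finType) (op : X -> X -> X) (f : X -> V).
Hypothesis f_op : forall x y, f (op x y) = bcycle Br (f x) (f y).

Section LambdaStable.
Variable Y : {set X}.
Hypothesis Y_sub : sub_cycle_set op Y.

Definition lam_stable b : bool := lam b @: (f @: Y) == f @: Y.

Lemma lam_stable0 : lam_stable 0.
Proof. by rewrite /lam_stable (eq_imset _ lam_id) imset_id. Qed.

Lemma lam_stableM b c : lam_stable b -> lam_stable c -> lam_stable (b *' c).
Proof.
rewrite /lam_stable => /eqP sb /eqP sc.
by rewrite (eq_imset _ (lamM b c)) imset_comp sc sb.
Qed.

Lemma lam_stableV b : lam_stable b -> lam_stable (inv b).
Proof.
rewrite /lam_stable => /eqP sb.
by rewrite -{1}sb -imset_comp (eq_imset _ (lamVK b)) imset_id.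
Qed.

Lemma lam_stable_f y : y \in Y -> lam_stable (f y).
Proof.
move=> yY; rewrite /lam_stable eqEcard (card_imset _ (can_inj (lamVK _))) leqnn andbT.
apply/subsetP => _ /imsetP [_ /imsetP [u uY ->] ->].
have [w wY <-] := Y_sub.2 y yY u uY.
by rewrite f_op /bcycle lamKV imset_f.
Qed.

Definition lam_core b : Prop := forall c, lam_stable c -> lam_stable (lam c b).

Lemma lam_core_stable b : lam_core b -> lam_stable b.
Proof. by move=> hb; rewrite -[b]lam_id; apply/hb/lam_stable0. Qed.

Lemma lam_core_lam b c : lam_core b -> lam_stable c -> lam_core (lam c b).
Proof. by move=> hb sc d sd; rewrite -lamM; apply/hb/lam_stableM. Qed.

Lemma lam_stableD_lam b u d :
  lam_core b -> lam_stable u -> lam_stable d -> lam_stable (u + lam d b).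
Proof.
move=> hb su sd; rewrite addr_bmul -lamM.
by apply/lam_stableM/hb/lam_stableM/sd/lam_stableV.
Qed.

Lemma lam_core0 : lam_core 0.
Proof. by move=> c _; rewrite lam0 lam_stable0. Qed.

Lemma lam_coreD b1 b2 : lam_core b1 -> lam_core b2 -> lam_core (b1 + b2).
Proof. by move=> h1 h2 c sc; rewrite lamD; apply/lam_stableD_lam/sc/h1. Qed.

Lemma lam_coreM b1 b2 : lam_core b1 -> lam_core b2 -> lam_core (b1 *' b2).
Proof.
move=> h1 h2 c sc; rewrite bmul_lam lamD -lamM.
by apply/lam_stableD_lam/lam_stableM/lam_core_stable/h1/sc/h1.
Qed.

Lemma lam_coreMn b n : lam_core b -> lam_core (b *+ n).
Proof.
move=> hb; elim: n => [|n IH]; first exact: lam_core0.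
by rewrite mulrS; apply: lam_coreD.
Qed.

(* In the finite group (B, +), - b is a multiple of b. *)
Lemma lam_coreN b : lam_core b -> lam_core (- b).
Proof. by rewrite -zmodVgE invg_expg zmodXgE; apply: lam_coreMn. Qed.

Lemma lam_coreV b : lam_core b -> lam_core (inv b).
Proof.
move=> hb; rewrite binvE.
by apply/lam_coreN/lam_core_lam/lam_stableV/lam_core_stable.
Qed.

Lemma lam_core_f y : y \in Y -> lam_core (f y).
Proof.
move=> yY c /eqP sc; have : lam c (f y) \in f @: Y by rewrite -sc !imset_f.
by case/imsetP => w wY ->; apply: lam_stable_f.
Qed.

Lemma bi_subgroup_lam_core : bi_subgroup Br lam_core.
Proof.
split; first exact: lam_core0.
split; first exact: lam_coreD.
split; first exact: lam_coreN.
split; first by rewrite bone0; apply: lam_core0.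
split; [exact: lam_coreM | exact: lam_coreV].
Qed.

End LambdaStable.

Lemma irreducible_of_brace :
  injective f ->
  (exists x : X, forall c : V, (exists y : X, f y = c) <-> (exists b, lam b (f x) = c)) ->
  (forall x : X, forall b : B, Bgen Br (f x) b) -> irreducible_cs op.
Proof.
move=> f_inj [x0 orbit] gen Y Y_sub.
have [-> | [y yY]] := set_0Vmem Y; [by left | right].
have stable b : lam_stable Y b.
  apply: lam_core_stable; apply: (gen y b (lam_core Y)); first exact: bi_subgroup_lam_core.
  exact: lam_core_f.
apply/setP => z; rewrite inE -(mem_imset _ _ f_inj).
have [b1 e1] := (orbit (f z)).1 (ex_intro _ z erefl).
have [b2 e2] := (orbit (f y)).1 (ex_intro _ y erefl).
rewrite -e1 -[f x0](lamVK b2) e2 -lamM -(eqP (stable (b1 *' inv b2))).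
by rewrite !imset_f.
Qed.

End IrreducibleOfBrace.

End Brace.

Lemma fin_nat_collision (T : finType) (g : nat -> T) : exists i j, i < j /\ g i = g j.
Proof.
pose h (i : 'I_#|T|.+1) := g i.
have /injectivePn [i [j neq_ij eq_ij]] : ~~ injectiveb h.
  by apply/negP => /injectiveP/leq_card; rewrite card_ord ltnn.
case: (ltngtP i j) => [lt_ij | lt_ji | /val_inj eq]; [by exists i, j | by exists j, i |].
by rewrite eq eqxx in neq_ij.
Qed.

Section StructurePermutations.
Variables (X : finType) (op : X -> X -> X).
Hypothesis op_inj : forall x, injective (op x).
Hypothesis op_cycle : forall x y z, op (op x y) (op x z) = op (op y x) (op y z).
Local Open Scope group_scope.

Lemma sub_cycle_set_closed (Y : {set X}) :
  (forall x y, x \in Y -> y \in Y -> op x y \in Y) -> sub_cycle_set op Y.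
Proof.
move=> Y_op; split=> // x xY z zY.
have opY : op x @: Y = Y.
  apply/eqP; rewrite eqEcard card_imset // leqnn andbT.
  by apply/subsetP => _ /imsetP [y yY ->]; apply: Y_op.
have /imsetP [y yY ->] : z \in op x @: Y by rewrite opY.
by exists y.
Qed.

Definition sigma x : {perm X} := perm (@op_inj x).

Lemma sigmaE x y : sigma x y = op x y.
Proof. by rewrite permE. Qed.

Definition step (p : {perm X}) (w : X) : {perm X} := p * sigma (p w).

Lemma stepC p x y : step (step p x) y = step (step p y) x.
Proof. by apply/permP => z; rewrite /step !permM !sigmaE op_cycle. Qed.

Lemma foldl_step_perm s1 s2 p : perm_eq s1 s2 -> foldl step p s1 = foldl step p s2.
Proof.
have step_rem s x q : x \in s -> foldl step q s = foldl step q (x :: rem x s).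
  elim: s q => //= y s IH q; case: eqVneq => [-> //| neq_yx].
  by rewrite inE eq_sym (negbTE neq_yx) /= => /(IH (step q y)) ->; rewrite /= stepC.
elim: s1 s2 p => [|x s1 IH] s2 p; first by move/perm_size; case: s2.
move=> eq12; have xs2 : x \in s2 by rewrite -(perm_mem eq12) mem_head.
rewrite (step_rem _ _ _ xs2) /=; apply: IH.
by rewrite -(perm_cons x); apply: perm_trans eq12 (perm_to_rem xs2).
Qed.

Definition tau_seq (s : seq X) : {perm X} := foldl step 1 s.

Definition vec_seq (a : X -> nat) : seq X := flatten [seq nseq (a x) x | x <- enum X].

Lemma count_vec_seq a y : count_mem y (vec_seq a) = a y.
Proof.
rewrite count_flatten -map_comp.
rewrite (eq_map (g := fun x => ((x == y) * a x)%N)); last by move=> x; rewrite /= count_nseq.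
rewrite sumnE big_map big_enum /= (bigD1 y) //= eqxx mul1n big1 ?addn0 //.
by move=> x /negbTE ->.
Qed.

Definition tau (a : X -> nat) : {perm X} := tau_seq (vec_seq a).

Lemma tau_count a s : (forall y, a y = count_mem y s) -> tau a = tau_seq s.
Proof.
by move=> a_s; apply: foldl_step_perm; apply/allP => y _; rewrite /= count_vec_seq a_s.
Qed.

Lemma eq_tau a b : a =1 b -> tau a = tau b.
Proof. by move=> eq_ab; apply: tau_count => y; rewrite count_vec_seq eq_ab. Qed.

Lemma tau0 : tau (fun _ => 0) = 1.
Proof. exact: (tau_count (s := [::])). Qed.

Lemma tau_add_unit a w : tau (fun y => a y + (y == w)) = step (tau a) w.
Proof.
rewrite (tau_count (s := rcons (vec_seq a) w)); first by rewrite /tau_seq foldl_rcons.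
by move=> y; rewrite -cats1 count_cat count_vec_seq /= addn0 eq_sym.
Qed.

Lemma tau_unit x : tau (fun y => y == x) = sigma x.
Proof.
by rewrite (eq_tau (b := fun y => 0 + (y == x))) // tau_add_unit tau0 /step mul1g perm1.
Qed.

Definition vmul (a b : X -> nat) : X -> nat := fun y => a y + b (tau a y).

Lemma tau_vmul a b : tau (vmul a b) = tau a * tau b.
Proof.
have tau_vmul_seq s : tau (vmul a (fun y => count_mem y s)) = tau a * tau_seq s.
  elim/last_ind: s => [|s w IH].
    by rewrite mulg1; apply: eq_tau => y; rewrite /vmul addn0.
  rewrite (eq_tau (b := fun y => vmul a (fun y => count_mem y s) y + (y == (tau a)^-1 w))).
    by rewrite tau_add_unit IH /step /tau_seq foldl_rcons /step permM permKV mulgA.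
  move=> y; rewrite /vmul -cats1 count_cat /= addn0 addnA; congr (_ + _).
  by rewrite -[in RHS](inj_eq (@perm_inj _ (tau a))) permKV eq_sym.
by rewrite -tau_vmul_seq; apply: eq_tau => y; rewrite /vmul count_vec_seq.
Qed.

Definition ker_stable (q : {perm X}) := forall k, tau k = 1 -> tau (k \o q) = 1.

Lemma ker_stableM p q : ker_stable p -> ker_stable q -> ker_stable (p * q).
Proof.
move=> sp sq k /sq/sp <-.
by apply: eq_tau => y; rewrite /= permM.
Qed.

Lemma ker_stable1 : ker_stable 1.
Proof. by move=> k k1; rewrite -[RHS]k1; apply: eq_tau => y; rewrite /= perm1. Qed.

Lemma ker_stableX q n : ker_stable q -> ker_stable (q ^+ n).
Proof.
move=> sq; elim: n => [|n IH]; first exact: ker_stable1.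
by rewrite expgS; apply: ker_stableM.
Qed.

Lemma ker_stable_sigmaV x : ker_stable (sigma x)^-1.
Proof.
move=> k k1; apply: (mulgI (sigma x)); rewrite mulg1 -{1}tau_unit -tau_vmul.
rewrite (eq_tau (b := fun y => k y + (y == x))); last first.
  by move=> y; rewrite /vmul tau_unit /= permK addnC.
by rewrite tau_add_unit k1 /step mul1g perm1.
Qed.

Lemma ker_stable_tauV a : ker_stable (tau a)^-1.
Proof.
rewrite /tau; elim/last_ind: (vec_seq a) => [|s w IH].
  by rewrite /tau_seq /= invg1; apply: ker_stable1.
by rewrite /tau_seq foldl_rcons /step invMg; apply: ker_stableM => //; apply: ker_stable_sigmaV.
Qed.

Lemma ker_stable_tau a : ker_stable (tau a).
Proof.
by rewrite -[tau a]invgK invg_expg; apply/ker_stableX/ker_stable_tauV.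
Qed.

Lemma tau_add a d : tau (fun y => a y + d y) = tau a * tau (d \o (tau a)^-1).
Proof. by rewrite -tau_vmul; apply: eq_tau => y; rewrite /vmul /= permK. Qed.

Lemma tau_addK a k : tau k = 1 -> tau (fun y => a y + k y) = tau a.
Proof. by move=> k1; rewrite tau_add ker_stable_tauV // mulg1. Qed.

Lemma tau_addI a d : tau (fun y => a y + d y) = tau a -> tau d = 1.
Proof.
rewrite tau_add -[X in _ = X]mulg1 => /mulgI/(ker_stable_tau a) <-.
by apply: eq_tau => y; rewrite /= permK.
Qed.

Lemma tau_ker_add k1 k2 : tau k1 = 1 -> tau k2 = 1 -> tau (fun y => k1 y + k2 y) = 1.
Proof. by move=> k1_1 k2_1; rewrite tau_addK. Qed.

Lemma tau_ker_muln m k : tau k = 1 -> tau (fun y => m * k y)%N = 1.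
Proof.
move=> k_1; elim: m => [|m IH]; first by rewrite -tau0; apply: eq_tau.
by rewrite (eq_tau (b := fun y => k y + m * k y)%N) ?tau_ker_add // => y; rewrite mulSn.
Qed.

Lemma tau_period w : exists2 p, 0 < p & tau (fun y => p * (y == w))%N = 1.
Proof.
have [i [j [lt_ij eq_ij]]] := fin_nat_collision (fun n => tau (fun y => n * (y == w))%N).
exists (j - i); first by rewrite subn_gt0.
apply: (@tau_addI (fun y => i * (y == w))%N); rewrite [RHS]eq_ij.
by apply: eq_tau => y; rewrite -mulnDl subnKC // ltnW.
Qed.

Lemma tau_unit_dvdn N N' w : N %| N' ->
  tau (fun y => N * (y == w))%N = 1 -> tau (fun y => N' * (y == w))%N = 1.
Proof.
move=> /dvdnP [m ->] hN; rewrite (eq_tau (b := fun y => m * (N * (y == w)))%N).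
  exact: tau_ker_muln.
by move=> y; rewrite mulnA.
Qed.

Lemma tau_common_period :
  exists2 N, 1 < N & forall w, tau (fun y => N * (y == w))%N = 1.
Proof.
have [N N_gt0 hN] :
    exists2 N, 0 < N & forall w, w \in enum X -> tau (fun y => N * (y == w))%N = 1.
  elim: (enum X) => [|w s [N N_gt0 hN]]; first by exists 1%N.
  have [p p_gt0 hp] := tau_period w.
  exists (p * N)%N => [|v]; first by rewrite muln_gt0 p_gt0.
  rewrite inE => /predU1P [-> | vs].
    exact: tau_unit_dvdn (dvdn_mulr _ (dvdnn p)) hp.
  exact: tau_unit_dvdn (dvdn_mull _ (dvdnn N)) (hN v vs).
exists (2 * N)%N => [|w]; first exact: leq_pmulr.
by apply: tau_unit_dvdn (dvdn_mull _ (dvdnn N)) _; rewrite hN ?mem_enum.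
Qed.

Lemma tau_modn N : (forall w, tau (fun y => N * (y == w))%N = 1) ->
  forall a, tau (fun y => a y %% N) = tau a.
Proof.
move=> hN a.
have tau_N s : tau (fun y => N * count_mem y s)%N = 1.
  elim: s => [|w s IH]; first by rewrite -tau0; apply: eq_tau => y; rewrite muln0.
  rewrite (eq_tau (b := fun y => N * (y == w) + N * count_mem y s)%N) ?tau_ker_add //.
  by move=> y; rewrite /= mulnDr eq_sym.
rewrite -(tau_addK _ (tau_N (vec_seq (fun y => a y %/ N)))); apply: eq_tau => y.
by rewrite count_vec_seq addnC mulnC -divn_eq.
Qed.

End StructurePermutations.

Section VectorBrace.
Variables (X : finType) (op : X -> X -> X).
Hypothesis op_inj : forall x, injective (op x).
Hypothesis op_cycle : forall x y z, op (op x y) (op x z) = op (op y x) (op y z).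
(* The modulus is written M.+2 so that 'I_M.+2 is a ring in which 1 != 0. *)
Variable M : nat.
Hypothesis tau_period_M : forall w, tau op_inj (fun y => M.+2 * (y == w))%N = 1%g.
Local Notation B := {ffun X -> 'I_M.+2}.
Local Notation sigma := (sigma op_inj).
Local Open Scope ring_scope.
Implicit Types a b c : B.

Definition tauZ a : {perm X} := tau op_inj (fun y => a y : nat).

Definition zmul a b : B := [ffun y => a y + b (tauZ a y)].

Definition zinv a : B := [ffun y => - a ((tauZ a)^-1%g y)].

Lemma tauZ_mul a b : tauZ (zmul a b) = (tauZ a * tauZ b)%g.
Proof.
rewrite /tauZ -tau_vmul // -[in RHS](tau_modn op_cycle tau_period_M).
by apply: eq_tau => // y; rewrite /vmul ffunE.
Qed.

Lemma tauZ0 : tauZ 0 = 1%g.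
Proof. by rewrite /tauZ -(tau0 op_inj op_cycle); apply: eq_tau => // y; rewrite ffunE. Qed.

Lemma zmul0 a : zmul 0 a = a.
Proof. by apply/ffunP => y; rewrite !ffunE tauZ0 perm1 add0r. Qed.

Lemma zmulr0 a : zmul a 0 = a.
Proof. by apply/ffunP => y; rewrite !ffunE addr0. Qed.

Lemma zmulA a b c : zmul a (zmul b c) = zmul (zmul a b) c.
Proof. by apply/ffunP => y; rewrite !ffunE tauZ_mul permM addrA. Qed.

Lemma zmulV a : zmul a (zinv a) = 0.
Proof. by apply/ffunP => y; rewrite !ffunE permK addrN. Qed.

Lemma zmulVl a : zmul (zinv a) a = 0.
Proof.
have zinvK : zinv (zinv a) = a.
  by rewrite -[LHS]zmul0 -(zmulV a) -zmulA zmulV zmulr0.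
by rewrite -{2}zinvK zmulV.
Qed.

Lemma zmulDr a b c : zmul a (b + c) = zmul a b - a + zmul a c.
Proof. by apply/ffunP => y; rewrite !ffunE !addrA addrNK. Qed.

Definition vec_brace : brace B :=
  Brace (@addrA B) (@addrC B) (@add0r B) (@addNr B) zmulA zmul0 zmulVl zmulDr.

Definition unitv x : B := [ffun y => (y == x)%:R].

Lemma tauZ_inv a : tauZ (zinv a) = (tauZ a)^-1%g.
Proof. by apply/esym/eqP; rewrite eq_invg_mul -tauZ_mul zmulV tauZ0. Qed.

Lemma tauZ_unit x : tauZ (unitv x) = sigma x.
Proof.
rewrite /tauZ -(tau_unit op_inj op_cycle); apply: eq_tau => // y.
by rewrite ffunE; case: (y == x).
Qed.

Lemma lam_unit b x : blambda vec_brace b (unitv x) = unitv ((tauZ b)^-1%g x).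
Proof.
apply/ffunP => y; rewrite /blambda /= !ffunE addKr.
by rewrite -[in RHS](inj_eq (@perm_inj _ (tauZ b))) permKV.
Qed.

Lemma unitv_inj : injective unitv.
Proof.
move=> x x' /ffunP/(_ x); rewrite !ffunE eqxx.
by case: eqP => // _ /(congr1 val).
Qed.

Lemma unitv_op x y : unitv (op x y) = bcycle vec_brace (unitv x) (unitv y).
Proof. by rewrite /bcycle lam_unit /= tauZ_inv tauZ_unit invgK sigmaE. Qed.

Hypothesis irr : irreducible_cs op.

Lemma tauZ_orbit x0 y : exists b, (tauZ b)^-1%g x0 = y.
Proof.
pose Y := [set (tauZ b)^-1%g x0 | b : B].
have Y_sub : sub_cycle_set op Y.
  apply: sub_cycle_set_closed => // _ _ /imsetP [b _ ->] /imsetP [c _ ->].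
  apply/imsetP; exists (zmul (zinv (unitv ((tauZ b)^-1%g x0))) c) => //.
  by rewrite tauZ_mul tauZ_inv tauZ_unit invMg invgK permM sigmaE.
have x0Y : x0 \in Y by apply/imsetP; exists 0 => //; rewrite tauZ0 invg1 perm1.
have [Y0 | YT] := irr Y_sub; first by rewrite Y0 inE in x0Y.
have /imsetP [b _ ->] : y \in Y by rewrite YT inE.
by exists b.
Qed.

Lemma unitv_gen x b : Bgen vec_brace (unitv x) b.
Proof.
move=> S [S0 [SD [SN [_ [SM SV]]]]] Sx.
have S_unit y : S (unitv y).
  pose Y := [set y | `[< S (unitv y) >]].
  have Y_sub : sub_cycle_set op Y.
    apply: sub_cycle_set_closed => // y1 y2; rewrite !inE => /asboolP S1 /asboolP S2.
    apply/asboolP; rewrite unitv_op /bcycle /blambda.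
    by apply: SD; [apply/SN/SV | apply/SM/S2/SV].
  have Y_def z : (z \in Y) = `[< S (unitv z) >] by rewrite inE.
  have [Y0 | YT] := irr Y_sub.
    by move/asboolP: Sx; rewrite -Y_def Y0 inE.
  by apply/asboolP; rewrite -Y_def YT inE.
have -> : b = \sum_(y : X) unitv y *+ b y.
  apply/ffunP => z; rewrite sum_ffunE (bigD1 z) //= big1 => [|y neq_yz].
    by rewrite ffunMnE ffunE eqxx addr0 mulr1n natr_Zp.
  by rewrite ffunMnE ffunE eq_sym (negbTE neq_yz) mul0rn.
apply: big_ind => [|u v|y _]; [exact: S0 | exact: SD |].
elim: (b y : nat) => [|n IH]; [exact: S0 | rewrite mulrS; exact: SD].
Qed.

Lemma unitv_orbit x0 c :
  (exists y, unitv y = c) <-> (exists b, blambda vec_brace b (unitv x0) = c).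
Proof.
split=> [[y <-] | [b <-]]; last by exists ((tauZ b)^-1%g x0); rewrite lam_unit.
by have [b <-] := tauZ_orbit x0 y; exists b; rewrite lam_unit.
Qed.

End VectorBrace.

Theorem mainTheorem7 (X : finType) (op : X -> X -> X) :
  is_cycle_set op ->
  (irreducible_cs op <->
   exists (B : finType) (Br : brace B) (f : X -> B),
     (* X is a subset of B (via the injection f) with the induced structure *)
     injective f /\
     (forall x y, f (op x y) = bcycle Br (f x) (f y)) /\
     (* X = { lambda_b(x) : b in B } for some x in X *)
     (exists x : X, forall c : B,
         (exists y : X, f y = c) <-> (exists b : B, blambda Br b (f x) = c)) /\
     (* B = B(x) for all x in X *)
     (forall x : X, forall b : B, Bgen Br (f x) b)).
Proof.
move=> [[x0] [op_bij op_cycle]]; have op_inj x : injective (op x) := bij_inj (op_bij x).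
split=> [irr | [B [Br [f [f_inj [f_op [orbit gen]]]]]]]; last first.
  exact: irreducible_of_brace f_op f_inj orbit gen.
have [[|[|M]] // _ tau_period_M] := tau_common_period op_inj op_cycle.
exists _, (vec_brace op_cycle tau_period_M), (@unitv X M).
split; first exact: unitv_inj.
split; first exact: unitv_op.
split; first by exists x0; apply: unitv_orbit.
exact: unitv_gen.
Qed.
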